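(* For $\theta=(\theta_1,\ldots,\theta_n)$ and $1\le i<n$ one has \[ G_{\ldots,\theta_i,\theta_{i+1},\ldots}(x|t) = -\beta\, G_{\ldots,\theta_i+1,\theta_{i+1},\ldots}(x|t) - \frac{1+\beta t_{n+\theta_i-i+1}}{1+\beta t_{n+\theta_{i+1}-i}}\Big(G_{\ldots,\theta_{i+1}-1,\theta_i+1,\ldots}(x|t)+\beta\, G_{\ldots,\theta_{i+1},\theta_i+1,\ldots}(x|t)\Big), \] where only the $i$-th and $(i+1)$-th entries of the index are changed.
   Context: Let $\beta$ be a parameter, $x=(x_1,\ldots,x_n)$ variables and $t=(t_1,t_2,\ldots)$ equivariant parameters. Write $x\oplus y=x+y+\beta xy$ and define the $\beta$-deformed factorial power $(x|t)^r=\prod_{i=1}^r (x\oplus t_i)$. For a sequence $\theta=(\theta_1,\ldots,\theta_n)$ (a partition or, more generally, a sequence of integers for which the powers below make sense), the factorial Grothendieck polynomial is given by the determinant formula (Ikeda–Naruse) \[ G_\theta(x|t)=\frac{\det\big[(x_j|t)^{\theta_i+n-i}(1+\beta x_j)^{i-1}\big]_{1\le i,j\le n}}{\det\big[x_j^{n-i}\big]_{1\le i,j\le n}}, \] the denominator being the Vandermonde determinant $\prod_{i<j}(x_i-x_j)$; this determinant formula is used to define $G_\theta$ for non-partition indices $\theta$ appearing in the statement. *)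

From mathcomp Require Import all_boot all_order all_algebra.
Set Implicit Arguments. Unset Strict Implicit. Unset Printing Implicit Defensive.
Import Order.TTheory GRing.Theory Num.Theory.
Local Open Scope ring_scope.

Definition boplus {F : fieldType} (beta x y : F) : F := x + y + beta * x * y.

(* factorial power (x|t)^r = prod_{k=1}^r (x (+) t_k); t is 1-indexed (t 0 unused) *)
Definition fpow {F : fieldType} (beta : F) (t : nat -> F) (x : F) (r : nat) : F :=
  \prod_(1 <= k < r.+1) boplus beta x (t k).

(* integer exponent: only used when the exponent is >= 0 (guarded by hypotheses);
   value 0 for negative exponents is an irrelevant placeholder *)
Definition fpowz {F : fieldType} (beta : F) (t : nat -> F) (x : F) (r : int) : F :=
  match r with Posz m => fpow beta t x m | Negz _ => 0 end.

(* factorial Grothendieck polynomial via the Ikeda--Naruse determinant formula.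
   theta is 1-indexed: theta 1, ..., theta n; x : 'I_n -> F are the variables. *)
Definition Gfact {F : fieldType} (n : nat) (beta : F) (t : nat -> F)
    (theta : nat -> int) (x : 'I_n -> F) : F :=
  \det (\matrix_(a < n, b < n)
          (fpowz beta t (x b) (theta a.+1 + n%:Z - (a.+1)%:Z) * (1 + beta * x b) ^+ a))
  / \det (\matrix_(a < n, b < n) (x b ^+ (n - a.+1))).

Definition upd2 (theta : nat -> int) (i : nat) (u v : int) : nat -> int :=
  fun j => if j == i then u else if j == i.+1 then v else theta j.

From mathcomp Require Import all_boot all_order all_algebra.
From mathcomp Require Import perm ring zify.
Set Implicit Arguments. Unset Strict Implicit. Unset Printing Implicit Defensive.
Import Order.TTheory GRing.Theory Num.Theory.
Local Open Scope ring_scope.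

(* Only rows i and i+1 of the Ikeda--Naruse numerator change.  Since
   1 + beta (x (+) t) = (1 + beta x)(1 + beta t), the factorial powers satisfy
   (x|t)^r + beta (x|t)^(r+1) = (1 + beta t_(r+1)) (x|t)^r (1 + beta x), so by
   multilinearity both G_theta + beta G_(theta_i+1, theta_(i+1)) and
   G_(theta_(i+1)-1, theta_i+1) + beta G_(theta_(i+1), theta_i+1) are multiples
   of one and the same determinant, the second with the two rows swapped. *)

Section TwoRows.
Variables (F : fieldType) (n : nat) (A : 'M[F]_n) (k1 k2 : 'I_n).
Hypothesis k12 : k1 != k2.

Definition set_rows2 (p q : 'rV[F]_n) : 'M[F]_n :=
  \matrix_(a, b) (if a == k1 then p 0 b else if a == k2 then q 0 b else A a b).

Lemma det_set_rows2_linl a b p p' q :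
  \det (set_rows2 (a *: p + b *: p') q)
  = a * \det (set_rows2 p q) + b * \det (set_rows2 p' q).
Proof.
apply: (determinant_multilinear (i0 := k1)).
- by apply/rowP => j; rewrite !mxE eqxx.
- by apply/matrixP => r j; rewrite !mxE eq_sym (negbTE (neq_lift _ _)).
- by apply/matrixP => r j; rewrite !mxE eq_sym (negbTE (neq_lift _ _)).
Qed.

Lemma det_set_rows2_scalel c p q :
  \det (set_rows2 (c *: p) q) = c * \det (set_rows2 p q).
Proof.
by have := det_set_rows2_linl c 0 p p q; rewrite scale0r addr0 mul0r addr0.
Qed.

Lemma det_set_rows2_swap p q : \det (set_rows2 q p) = - \det (set_rows2 p q).
Proof.
have -> : set_rows2 q p = xrow k1 k2 (set_rows2 p q).
  apply/matrixP => a b; rewrite !mxE permE /=.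
  case: (eqVneq a k1) => [_|a1]; first by rewrite eq_sym (negbTE k12) eqxx.
  case: (eqVneq a k2) => [_|a2]; first by rewrite eqxx.
  by rewrite (negbTE a1) (negbTE a2).
by rewrite xrowE det_mulmx det_perm odd_tperm k12 expr1 mulN1r.
Qed.

End TwoRows.

Lemma fpowS (F : fieldType) (beta : F) t x r :
  fpow beta t x r.+1 = fpow beta t x r * boplus beta x (t r.+1).
Proof. by rewrite /fpow big_nat_recr. Qed.

Section Rows.
Variables (F : fieldType) (n : nat) (beta : F) (t : nat -> F) (x : 'I_n -> F).

Definition fpow_row (r e : nat) : 'rV[F]_n :=
  \row_b (fpow beta t (x b) r * (1 + beta * x b) ^+ e).

Lemma fpow_row_shift r e :
  fpow_row r e + beta *: fpow_row r.+1 e = (1 + beta * t r.+1) *: fpow_row r e.+1.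
Proof.
by apply/rowP => b; rewrite !mxE fpowS exprS /boplus; ring.
Qed.

Definition grothendieck_numerator (theta : nat -> int) : 'M[F]_n :=
  \matrix_(a, b)
     (fpowz beta t (x b) (theta a.+1 + n%:Z - (a.+1)%:Z) * (1 + beta * x b) ^+ a).

Definition vandermonde : F := \det (\matrix_(a < n, b < n) (x b ^+ (n - a.+1))).

Lemma GfactE theta :
  Gfact beta t theta x = \det (grothendieck_numerator theta) / vandermonde.
Proof. by []. Qed.

Lemma det_fpow_row_shift (A : 'M[F]_n) k1 k2 r e q :
  \det (set_rows2 A k1 k2 (fpow_row r e) q)
    + beta * \det (set_rows2 A k1 k2 (fpow_row r.+1 e) q)
  = (1 + beta * t r.+1) * \det (set_rows2 A k1 k2 (fpow_row r e.+1) q).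
Proof.
by rewrite -[X in X + _]mul1r -det_set_rows2_linl scale1r fpow_row_shift
           det_set_rows2_scalel.
Qed.

Lemma grothendieck_numerator_rows2 k (hk : (k.+1 < n)%N) theta th r1 r2 :
  (forall j, j != k.+1 -> j != k.+2 -> th j = theta j) ->
  th k.+1 + n%:Z - k.+1%:Z = r1%:Z -> th k.+2 + n%:Z - k.+2%:Z = r2%:Z ->
  grothendieck_numerator th
  = set_rows2 (grothendieck_numerator theta) (Ordinal (ltnW hk)) (Ordinal hk)
      (fpow_row r1 k) (fpow_row r2 k.+1).
Proof.
move=> th_theta th1 th2; apply/matrixP => a b; rewrite !mxE.
have [-> /=|a1] := eqVneq a (Ordinal (ltnW hk)); first by rewrite th1.
have [-> /=|a2] := eqVneq a (Ordinal hk); first by rewrite th2.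
by rewrite th_theta.
Qed.

Lemma Gfact_upd2 k (hk : (k.+1 < n)%N) theta u v r1 r2 :
  u + n%:Z - k.+1%:Z = r1%:Z -> v + n%:Z - k.+2%:Z = r2%:Z ->
  Gfact beta t (upd2 theta k.+1 u v) x
  = \det (set_rows2 (grothendieck_numerator theta) (Ordinal (ltnW hk)) (Ordinal hk)
            (fpow_row r1 k) (fpow_row r2 k.+1)) / vandermonde.
Proof.
move=> e1 e2; rewrite GfactE.
rewrite (grothendieck_numerator_rows2 hk (theta := theta) (r1 := r1) (r2 := r2)) //.
- by move=> j /negbTE j1 /negbTE j2; rewrite /upd2 j1 j2.
- by rewrite /upd2 eqxx.
- by rewrite /upd2 (gtn_eqF (ltnSn _)) eqxx.
Qed.

End Rows.

Theorem mainTheorem6 (F : fieldType) (n : nat) (beta : F) (t : nat -> F)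
    (x : 'I_n -> F) (theta : nat -> int) (i : nat) :
  (1 <= i)%N -> (i < n)%N ->
  injective x ->
  (forall j : nat, (1 <= j <= n)%N -> 0 <= theta j + n%:Z - j%:Z) ->
  1 + beta * t (absz (n%:Z + theta i.+1 - i%:Z)%R) != 0 ->
  Gfact beta t theta x =
    - beta * Gfact beta t (upd2 theta i (theta i + 1) (theta i.+1)) x
    - (1 + beta * t (absz (n%:Z + theta i - i%:Z + 1)%R))
        / (1 + beta * t (absz (n%:Z + theta i.+1 - i%:Z)%R))
      * (Gfact beta t (upd2 theta i (theta i.+1 - 1) (theta i + 1)) x
         + beta * Gfact beta t (upd2 theta i (theta i.+1) (theta i + 1)) x).
Proof.
case: i => [//|k] _ hk _ theta_ge0.
have /theta_ge0 ge0A : (1 <= k.+1 <= n)%N by rewrite /= ltnW.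
have /theta_ge0 ge0B : (1 <= k.+2 <= n)%N by [].
set a := absz (theta k.+1 + n%:Z - k.+1%:Z)%R.
set b := absz (theta k.+2 + n%:Z - k.+2%:Z)%R.
have eA : theta k.+1 + n%:Z - k.+1%:Z = a%:Z by rewrite gez0_abs.
have eB : theta k.+2 + n%:Z - k.+2%:Z = b%:Z by rewrite gez0_abs.
have -> : absz (n%:Z + theta k.+2 - k.+1%:Z)%R = b.+1.
  by have -> : n%:Z + theta k.+2 - k.+1%:Z = b.+1%:Z by lia.
have -> : absz (n%:Z + theta k.+1 - k.+1%:Z + 1)%R = a.+1.
  by have -> : n%:Z + theta k.+1 - k.+1%:Z + 1 = a.+1%:Z by lia.
move=> unit_b.
have k12 : Ordinal (ltnW hk) != Ordinal hk by rewrite -val_eqE /= ltn_eqF.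
pose N := grothendieck_numerator beta t x theta; pose R := fpow_row beta t x.
rewrite GfactE.
rewrite (grothendieck_numerator_rows2 beta t x hk (theta := theta) (th := theta) _ eA eB) //.
rewrite (Gfact_upd2 _ _ _ hk theta (u := theta k.+1 + 1) (r1 := a.+1) (r2 := b)); [|lia..].
rewrite (Gfact_upd2 _ _ _ hk theta (u := theta k.+2 - 1) (r1 := b) (r2 := a)); [|lia..].
rewrite (Gfact_upd2 _ _ _ hk theta (u := theta k.+2) (r1 := b.+1) (r2 := a)); [|lia..].
have shiftA := det_fpow_row_shift beta t x N (Ordinal (ltnW hk)) (Ordinal hk) a k (R b k.+1).
have shiftB := det_fpow_row_shift beta t x N (Ordinal (ltnW hk)) (Ordinal hk) b k (R a k.+1).
rewrite [X in _ = _ * X]det_set_rows2_swap // in shiftB.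
move: shiftA shiftB; set M := set_rows2 _ _ _; move: (vandermonde x)^-1 => iV.
move: (\det (M (R a k) (R b k.+1))) (\det (M (R a.+1 k) (R b k.+1)))
      (\det (M (R b k) (R a k.+1))) (\det (M (R b.+1 k) (R a k.+1)))
      (\det (M (R a k.+1) (R b k.+1))) => X Y Z W U hX hZ.
have -> : X = (1 + beta * t a.+1) * U - beta * Y by rewrite -hX addrK.
have -> : Z = (1 + beta * t b.+1) * - U - beta * W by rewrite -hZ addrK.
by field.
Qed.
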